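(* Let $A$ be a circular $m\times n$ matrix, $b\in\mathbb{Z}_+^m$, and let $\Gamma$ be a circuit in $D(A)$ with $p(\Gamma)>0$. Then the $\Gamma$-inequality $\sum_{j\in[n]}[p^-(\Gamma,j)+r(\Gamma,b)]x_j\ge r(\Gamma,b)(\beta(\Gamma,b)+1)+\sum_{i\in[m]:\bar a_i\in E(\Gamma)}b_i$ is valid for $Q^*(A,b)$.
   Context: Notation: $[n]=\{1,\dots,n\}$ with addition mod $n$ (index $0$ identified with $n$); for $a,c\in[n]$ with $t\ge0$ minimal such that $a+t\equiv c\pmod n$, $[a,c)_n=\{a,\dots,a+t-1\}$ (mod $n$). An $m\times n$ $\{0,1\}$-matrix $A$ is circular if for each row $i$ there are $\ell_i\in[n]$ and an integer $2\le k_i\le n-1$ such that row $i$ is the incidence vector of $[\ell_i,\ell_i+k_i)_n$. $Q(A,b)=\{x\in\mathbb{R}^n:Ax\ge b,x\ge0\}$, $Q^*(A,b)=\operatorname{conv}(Q(A,b)\cap\mathbb{Z}^n)$. $D(A)$: node set $[n]$ (labels mod $n$); forward row arcs $a_i=(\ell_i-1,\ell_i+k_i-1)$ ($i\in[m]$), forward short arcs $a_{m+j}=(j-1,j)$ ($j\in[n]$), reverse row arcs $\bar a_i=(\ell_i+k_i-1,\ell_i-1)$, reverse short arcs $\bar a_{m+j}=(j,j-1)$; lengths $k_i$, $1$, $-k_i$, $-1$ respectively. A circuit is a simple directed circuit; its winding number $p(\Gamma)$ satisfies $p(\Gamma)n=\sum_{a\in E(\Gamma)}l(a)$. A forward row arc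 $a_i$ jumps over $j$ iff $j\in[\ell_i,\ell_i+k_i)_n$; $(j-1,j)$ jumps over $j$ only; a reverse arc $\bar a_k$ jumps over $j$ iff $a_k$ does. $p^-(\Gamma,j)$ = number of reverse arcs of $\Gamma$ jumping over $j$. $t(\Gamma,b)=\sum_{i:a_i\in E(\Gamma)}b_i-\sum_{i:\bar a_i\in E(\Gamma)}b_i$, $\beta(\Gamma,b)=\lfloor t(\Gamma,b)/p(\Gamma)\rfloor$, $r(\Gamma,b)=t(\Gamma,b)-\beta(\Gamma,b)p(\Gamma)$. *)

From mathcomp Require Import all_boot all_order all_algebra.
From mathcomp Require Import reals.
Set Implicit Arguments. Unset Strict Implicit. Unset Printing Implicit Defensive.
Import Order.TTheory GRing.Theory Num.Theory.
Local Open Scope ring_scope.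

(* Conventions (0-based):
   - node labels of D(A) are residues mod n, represented by nat in {0..n-1}
     (the paper's node n is node 0);
   - column / variable index c : 'I_n stands for the paper's j = c+1;
   - l0 i : 'I_n stands for the paper's ell_i - 1, k i for k_i. *)

Section Circ.
Variables (m n : nat) (l0 : 'I_m -> 'I_n) (k : 'I_m -> nat).

(* Row i of a circular matrix: incidence vector of [ell_i, ell_i + k_i)_n,
   i.e. column j=c+1 belongs to it iff (j - ell_i) mod n < k_i. *)
Definition circ_inc (i : 'I_m) (c : 'I_n) : bool :=
  ((c + n - l0 i) %% n < k i)%N.

(* Arcs of D(A): (inl i, false) = a_i, (inr c, false) = a_{m+(c+1)},
   (inl i, true) = reverse arc of a_i, (inr c, true) = reverse of a_{m+(c+1)}. *)
Definition darc := (('I_m + 'I_n) * bool)%type.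

Definition base_tail (s : 'I_m + 'I_n) : nat :=
  match s with inl i => nat_of_ord (l0 i) | inr c => nat_of_ord c end.
Definition base_len (s : 'I_m + 'I_n) : nat :=
  match s with inl i => k i | inr _ => 1%N end.

Definition arc_tail (e : darc) : nat :=
  if e.2 then ((base_tail e.1 + base_len e.1) %% n)%N else base_tail e.1.
Definition arc_head (e : darc) : nat :=
  if e.2 then base_tail e.1 else ((base_tail e.1 + base_len e.1) %% n)%N.
Definition arc_len (e : darc) : int :=
  if e.2 then - (base_len e.1)%:Z else (base_len e.1)%:Z.

Definition jumps (e : darc) (c : 'I_n) : bool :=
  ((c + n - base_tail e.1) %% n < base_len e.1)%N.

Definition is_circuit (g : seq darc) : bool :=
  [&& g != [::], uniq (map arc_tail g)
    & cycle (fun e f : darc => arc_head e == arc_tail f) g].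

Definition winding (g : seq darc) : int :=
  ((\sum_(e <- g) arc_len e) %/ (n%:Z))%Z.

Variable b : 'I_m -> int.

Definition row_b (e : darc) : int :=
  match e.1 with inl i => if e.2 then - b i else b i | inr _ => 0 end.

Definition tval (g : seq darc) : int := \sum_(e <- g) row_b e.
Definition betav (g : seq darc) : int := ((tval g) %/ (winding g))%Z.
Definition rval (g : seq darc) : int := tval g - betav g * winding g.

Definition pminus (g : seq darc) (c : 'I_n) : nat :=
  count (fun e : darc => e.2 && jumps e c) g.

Definition rev_row_bsum (g : seq darc) : int :=
  \sum_(e <- g | e.2) match e.1 with inl i => b i | inr _ => 0 end.

End Circ.

Section Poly.
Variables (R : realType) (m n : nat).

Definition Qset (A : 'M[R]_(m, n)) (b : 'I_m -> int) (x : 'I_n -> R) : Prop :=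
  (forall i : 'I_m, (b i)%:~R <= \sum_(j < n) A i j * x j) /\
  (forall j : 'I_n, 0 <= x j).

Definition integral_vec (x : 'I_n -> R) : Prop :=
  exists z : 'I_n -> int, forall j, x j = (z j)%:~R.

Definition conv_hull (S : ('I_n -> R) -> Prop) (x : 'I_n -> R) : Prop :=
  exists (q : nat) (lam : 'I_q -> R) (pts : 'I_q -> ('I_n -> R)),
    [/\ forall t, 0 <= lam t, \sum_(t < q) lam t = 1, forall t, S (pts t)
      & forall j, x j = \sum_(t < q) lam t * pts t j].

Definition Qstar (A : 'M[R]_(m, n)) (b : 'I_m -> int) : ('I_n -> R) -> Prop :=
  conv_hull (fun y => Qset A b y /\ integral_vec y).

End Poly.

From Pilot Require Import Defs.
From mathcomp Require Import all_boot all_order all_algebra.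
From mathcomp Require Import reals.
From mathcomp Require Import zify ring.
Set Implicit Arguments. Unset Strict Implicit. Unset Printing Implicit Defensive.
Import Order.TTheory GRing.Theory Num.Theory.
Local Open Scope ring_scope.

(* Let z >= 0 be an integer point of Q(A,b) and, for an arc e, let cover e be
   the sum of the z_j over the columns j that e jumps over.  A closed walk of
   winding number p crosses every column p times more often forwards than
   backwards, so  sum_forward cover - sum_reverse cover = p * sum_j z_j.
   Forward row arcs have cover >= b_i (this is Az >= b), reverse ones have
   cover = sum_j p^-(G,j) z_j in total, and comparing with t(G,b) gives
   D := sum_j p^-(G,j) z_j - sum_{reverse a_i} b_i >= max(0, t - p sum_j z_j).
   A Chvatal-Gomory rounding of this pair of inequalities is the G-inequality;
   validity for Q^*(A,b) then follows by convexity. *)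

Lemma chvatal_gomory_round (t p X D : int) :
  0 < p -> 0 <= D -> t - p * X <= D ->
  (t %% p)%Z * ((t %/ p)%Z + 1 - X) <= D.
Proof.
move=> p_gt0 D_ge0 tD.
have t_eq := divz_eq t p.
have r_ge0 : 0 <= (t %% p)%Z by apply: modz_ge0; lia.
have r_ltp : (t %% p)%Z < p by apply: ltz_pmod.
move: (t %/ p)%Z (t %% p)%Z t_eq r_ge0 r_ltp => beta r t_eq r_ge0 r_ltp.
(* For X <= beta: t - p X = p (beta - X) + r >= r (beta - X) + r. *)
have [X_big|X_small] := lerP (beta + 1) X.
  have : 0 <= r * (X - (beta + 1)) by apply: mulr_ge0 => //; lia.
  nia.
have : 0 <= (p - r) * (beta - X) by apply: mulr_ge0; lia.
nia.
Qed.

Lemma conv_hull_ge (R : realType) (n : nat) (S : ('I_n -> R) -> Prop)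
    (a : 'I_n -> R) (c : R) :
  (forall y, S y -> c <= \sum_(j < n) a j * y j) ->
  forall x, conv_hull S x -> c <= \sum_(j < n) a j * x j.
Proof.
move=> S_ge x [q [lam [pts [lam_ge0 lam_sum1 pts_S x_eq]]]].
have -> : \sum_(j < n) a j * x j =
          \sum_(t < q) lam t * \sum_(j < n) a j * pts t j.
  under eq_bigr => j _ do rewrite x_eq mulr_sumr.
  rewrite exchange_big /=; apply: eq_bigr => t _; rewrite mulr_sumr.
  by apply: eq_bigr => j _; rewrite mulrCA.
rewrite -[c]mul1r -lam_sum1 mulr_suml.
by apply: ler_sum => t _; apply: ler_wpM2l; [exact: lam_ge0 | exact: S_ge].
Qed.

Definition b2i (P : bool) : int := if P then 1 else 0.

Lemma count_b2i (T : Type) (P : pred T) (s : seq T) :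
  (count P s)%:Z = \sum_(e <- s) b2i (P e).
Proof.
elim: s => [|x s IH]; first by rewrite big_nil.
by rewrite big_cons /= -IH /b2i; case: (P x); lia.
Qed.

Lemma modn_wrap (a n : nat) : (n <= a < n + n)%N -> (a %% n = a - n)%N.
Proof. by move=> /andP [na an]; rewrite -{1}(subnK na) modnDr modn_small //; lia. Qed.

Section Crossing.
Variables (m n : nat) (l0 : 'I_m -> 'I_n) (k : 'I_m -> nat).
Hypothesis k_le : forall i, (k i <= n)%N.

Local Notation tail := (arc_tail l0 k).
Local Notation head := (arc_head l0 k).

(* +1 / -1 for a forward / reverse arc passing over node 0, else 0. *)
Definition arc_wrap (e : darc m n) : int :=
  (if e.2 then -1 else 1) * b2i (n <= base_tail l0 e.1 + base_len k e.1)%N.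

Definition signed_jump (e : darc m n) (c : 'I_n) : int :=
  (if e.2 then -1 else 1) * b2i (jumps l0 k e c).

Lemma base_arc_bounds (s : 'I_m + 'I_n) :
  (base_tail l0 s < n)%N /\ (base_len k s <= n)%N.
Proof. by case: s => [i|c] /=; split; rewrite ?ltn_ord ?k_le //; have := ltn_ord c; lia. Qed.

Lemma arc_lenE (e : darc m n) :
  arc_len k e = (head e)%:Z - (tail e)%:Z + n%:Z * arc_wrap e.
Proof.
case: e => s d; have [] := base_arc_bounds s.
rewrite /arc_len /arc_head /arc_tail /arc_wrap /b2i /=.
move: (base_tail l0 s) (base_len k s) => T L T_lt L_le.
case: (leqP n (T + L)) => TL; last by rewrite modn_small //; case: d; lia.
by rewrite modn_wrap; case: d; lia.
Qed.

Lemma signed_jumpE (e : darc m n) (c : 'I_n) :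
  signed_jump e c =
  arc_wrap e - b2i (head e <= c)%N + b2i (tail e <= c)%N.
Proof.
case: e => s d; have [] := base_arc_bounds s.
rewrite /signed_jump /jumps /arc_head /arc_tail /arc_wrap /b2i /=.
move: (base_tail l0 s) (base_len k s) => T L T_lt L_le.
have c_lt := ltn_ord c.
have -> : ((c + n - T) %% n = if (T <= c)%N then c - T else c + n - T)%N.
  by case: (leqP T c) => Tc; [rewrite modn_wrap | rewrite modn_small]; lia.
case: (leqP n (T + L)) => TL; [rewrite modn_wrap; last lia | rewrite modn_small //];
  case: (leqP T c) => Tc; case: d => /=; repeat case: ifP => /=; lia.
Qed.

Lemma sum_cycle_telescope (F : nat -> int) (g : seq (darc m n)) :
  cycle (fun e f => head e == tail f) g ->
  \sum_(e <- g) (F (tail e) - F (head e)) = 0.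
Proof.
case: g => [|x s]; first by rewrite big_nil.
rewrite /= rcons_path => /andP [walk /eqP closed].
suff -> : \sum_(e <- x :: s) (F (tail e) - F (head e)) = F (tail x) - F (head (last x s)).
  by rewrite closed subrr.
elim: s x walk {closed} => [|y s IH] x /=; first by rewrite big_cons big_nil addr0.
by move=> /andP [/eqP xy walk]; rewrite big_cons IH // xy addrA subrK.
Qed.

Variable g : seq (darc m n).
Hypothesis g_circ : is_circuit l0 k g.

Lemma winding_sum_wrap : winding k g = \sum_(e <- g) arc_wrap e.
Proof.
case/and3P: g_circ => g_ne _ g_cyc.
have n_gt0 : (0 < n)%N.
  by case: g g_ne => // -[s d] _ _; have [] := base_arc_bounds s; lia.
rewrite /winding.
have -> : \sum_(e <- g) arc_len k e =
    \sum_(e <- g) ((fun v : nat => - v%:Z) (tail e) - (fun v : nat => - v%:Z) (head e))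
    + n%:Z * \sum_(e <- g) arc_wrap e.
  by rewrite mulr_sumr -big_split; apply: eq_bigr => e _; rewrite arc_lenE /=; ring.
by rewrite (sum_cycle_telescope (fun v : nat => - v%:Z) g_cyc) add0r mulKz //; lia.
Qed.

Lemma sum_signed_jump (c : 'I_n) : \sum_(e <- g) signed_jump e c = winding k g.
Proof.
case/and3P: (g_circ) => _ _ g_cyc.
have telescope := sum_cycle_telescope (fun v : nat => b2i (v <= c)%N) g_cyc.
rewrite winding_sum_wrap -[RHS]addr0 -[X in _ = _ + X]telescope -big_split.
by apply: eq_bigr => e _; rewrite signed_jumpE /=; ring.
Qed.

End Crossing.

Section IntegerPoint.
Variables (m n : nat) (l0 : 'I_m -> 'I_n) (k : 'I_m -> nat) (b : 'I_m -> int).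
Hypothesis k_le : forall i, (k i <= n)%N.
Variable z : 'I_n -> int.
Hypothesis z_ge0 : forall c, 0 <= z c.
Hypothesis Az_ge : forall i, b i <= \sum_(c < n) (if circ_inc l0 k i c then z c else 0).

Definition cover (e : darc m n) : int :=
  \sum_(c < n) b2i (jumps l0 k e c) * z c.

Definition row_bound (e : darc m n) : int :=
  match e.1 with inl i => b i | inr _ => 0 end.

Lemma row_bound_le_cover (e : darc m n) : row_bound e <= cover e.
Proof.
case: e => [[i|c'] d]; rewrite /row_bound /cover /=.
  suff -> : \sum_(c < n) b2i (jumps l0 k (inl i, d) c) * z c =
            \sum_(c < n) (if circ_inc l0 k i c then z c else 0) by [].
  by apply: eq_bigr => c _; rewrite /b2i /jumps /circ_inc /=; case: ifP => _; ring.
by apply: sumr_ge0 => c _; rewrite /b2i; case: ifP; rewrite ?mul1r ?mul0r.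
Qed.

Lemma sum_pminus_cover (g : seq (darc m n)) :
  \sum_(c < n) (pminus l0 k g c)%:Z * z c = \sum_(e <- g | e.2) cover e.
Proof.
under eq_bigr => c _ do rewrite /pminus count_b2i mulr_suml.
rewrite exchange_big [RHS]big_mkcond /=; apply: eq_bigr => e _.
by case: e.2 => //; apply: big1 => c _; rewrite /b2i mul0r.
Qed.

Lemma tvalE (g : seq (darc m n)) :
  Defs.tval b g = \sum_(e <- g | ~~ e.2) row_bound e - \sum_(e <- g | e.2) row_bound e.
Proof.
rewrite /Defs.tval (bigID (fun e : darc m n => e.2)) addrC -sumrN /=.
by congr (_ + _); apply: eq_bigr => -[[i|c] []] //= _; rewrite ?oppr0.
Qed.

Variable g : seq (darc m n).
Hypothesis g_circ : is_circuit l0 k g.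

Lemma sum_signed_cover :
  \sum_(e <- g | ~~ e.2) cover e - \sum_(e <- g | e.2) cover e
  = winding k g * \sum_(c < n) z c.
Proof.
transitivity (\sum_(e <- g) \sum_(c < n) signed_jump l0 k e c * z c).
  rewrite [RHS](bigID (fun e : darc m n => e.2)) addrC -sumrN /=.
  congr (_ + _); apply: eq_bigr => e; rewrite /signed_jump.
    by move->; rewrite -sumrN; apply: eq_bigr => c _; ring.
  by move/negPf ->; apply: eq_bigr => c _; ring.
rewrite exchange_big mulr_sumr; apply: eq_bigr => c _.
by rewrite -mulr_suml sum_signed_jump.
Qed.

Lemma gamma_ineq_int :
  0 < winding k g ->
  rval k b g * (betav k b g + 1) + rev_row_bsum b g
    <= \sum_(c < n) ((pminus l0 k g c)%:Z + rval k b g) * z c.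
Proof.
move=> p_gt0.
set p := winding k g; set t := Defs.tval b g; set X := \sum_(c < n) z c.
have -> : rev_row_bsum b g = \sum_(e <- g | e.2) row_bound e by [].
set D := \sum_(e <- g | e.2) cover e - \sum_(e <- g | e.2) row_bound e.
have D_ge0 : 0 <= D by rewrite subr_ge0; apply: ler_sum => e _; apply: row_bound_le_cover.
have D_ge : t - p * X <= D.
  have fwd_le : \sum_(e <- g | ~~ e.2) row_bound e <= \sum_(e <- g | ~~ e.2) cover e.
    by apply: ler_sum => e _; apply: row_bound_le_cover.
  rewrite -sum_signed_cover /t tvalE /D; lia.
have rvalE : rval k b g = (t %% p)%Z.
  by rewrite /rval /betav -/t -/p {1}(divz_eq t p); ring.
have -> : \sum_(c < n) ((pminus l0 k g c)%:Z + rval k b g) * z c =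
          \sum_(c < n) (pminus l0 k g c)%:Z * z c + rval k b g * X.
  by rewrite /X mulr_sumr -big_split /=; apply: eq_bigr => c _; ring.
have := chvatal_gomory_round p_gt0 D_ge0 D_ge.
rewrite /D -sum_pminus_cover rvalE /betav -/t -/p.
lia.
Qed.

End IntegerPoint.

Theorem theorem4p5 (R : realType) (m n : nat) (A : 'M[R]_(m, n))
    (l0 : 'I_m -> 'I_n) (k : 'I_m -> nat)
    (hk : forall i, (2 <= k i <= n - 1)%N)
    (hA : forall i j, A i j = (if circ_inc l0 k i j then 1 else 0))
    (b : 'I_m -> int) (hb : forall i, 0 <= b i)
    (g : seq (@darc m n)) (hg : is_circuit l0 k g)
    (hp : 0 < winding k g) :
  forall x : 'I_n -> R, Qstar A b x ->
    ((rval k b g) * (betav k b g + 1) + rev_row_bsum b g)%:~R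
      <= \sum_(j < n) ((pminus l0 k g j)%:Z + rval k b g)%:~R * x j.
Proof.
have k_le i : (k i <= n)%N by have := hk i; lia.
apply: conv_hull_ge => y [[Ay_ge y_ge0] [z y_eq]].
have z_ge0 c : 0 <= z c by rewrite -(ler0z R) -y_eq.
have Az_ge i : b i <= \sum_(c < n) (if circ_inc l0 k i c then z c else 0).
  have Ay_eq : \sum_(j < n) A i j * y j =
               (\sum_(c < n) (if circ_inc l0 k i c then z c else 0))%:~R.
    by rewrite rmorph_sum; apply: eq_bigr => j _; rewrite hA y_eq; case: ifP; rewrite ?mul1r ?mul0r.
  by have := Ay_ge i; rewrite Ay_eq ler_int.
under eq_bigr => j _ do rewrite y_eq -intrM.
rewrite -rmorph_sum ler_int.
exact: (gamma_ineq_int k_le z_ge0 Az_ge hg).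
Qed.
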